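(* Let $f:\mathbb{R}^n\to\mathbb{R}$ be differentiable and pseudo-convex, with $\nabla f$ $L$-Lipschitz continuous, and assume the stationary set $X^*$ is non-empty. Let $\{x^k\},\{z^k\}$ be generated by Algorithm 2 (with $\nabla f(x^k)\ne0$ for all $k$). Then for every $x^*\in X^*$ and every $k$, $$\|x^{k+1}-x^*\|^2\le\|x^k-x^*\|^2-\kappa_2\|x^k-z^k\|^2,$$ where $\kappa_2=2\beta-1-\beta^2\nu^2>0$.
   Context: Pseudo-convex: $\nabla f$ pseudo-monotone, i.e. $\langle \nabla f(x),y-x\rangle\ge0\Rightarrow\langle\nabla f(y),y-x\rangle\ge0$ for all $x,y$. $X^*=\{x:\nabla f(x)=0\}$. Algorithm 2: parameters $0<\mu<\nu<1$, $0<\underline{h}<1\le\gamma_0^0\le\overline{h}$, $\theta\in(0,1)$, $\tau>1$, $\beta\in\left(\frac{1-\sqrt{1-\nu^2}}{\nu^2},1\right]$, starting point $x^0$. At iteration $k$: for $\gamma>0$ let $z^k(\gamma)=x^k-\gamma\nabla f(x^k)$ and $r_k(\gamma)=\gamma\|\nabla f(z^k(\gamma))-\nabla f(x^k)\|/\|z^k(\gamma)-x^k\|$; starting from $\gamma_0^k$, while $r_k(\gamma_l^k)>\nu$ set $\gamma_{l+1}^k=\gamma_l^k\theta\min\{1,1/r_k(\gamma_l^k)\}$; let $h_k$ be the first $\gamma_l^k$ with $r_k(\gamma_l^k)\le\nu$. Then $z^k=x^k-h_k\nabla f(x^k)$, $x^{k+1}=x^k-h_k\big(\nabla f(x^k)-\beta(\nabla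 f(x^k)-\nabla f(z^k))\big)$, and $\gamma_0^{k+1}=\mathbf{P}_{[\underline{h},\overline{h}]}(\tau h_k)$ if $r_k(h_k)\le\mu$, else $\gamma_0^{k+1}=\mathbf{P}_{[\underline{h},\overline{h}]}(h_k)$, where $\mathbf{P}_{[a,b]}$ is projection onto $[a,b]$. *)

From HB Require Import structures.
From mathcomp Require Import all_boot all_order all_algebra.
From mathcomp Require Import all_classical all_reals all_analysis.
Set Implicit Arguments. Unset Strict Implicit. Unset Printing Implicit Defensive.
Import Order.TTheory GRing.Theory Num.Theory.
Import numFieldNormedType.Exports.
Local Open Scope ring_scope.

Section Defs.
Variables (R : realType) (n : nat).
Notation vec := 'rV[R]_n.

Definition dotv (u v : vec) : R := \sum_(i < n) u 0 i * v 0 i.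
Definition enorm (u : vec) : R := Num.sqrt (dotv u u).

Definition is_gradient (f : vec -> R) (grad : vec -> vec) : Prop :=
  forall x, differentiable f x /\ forall v, 'd f x v = dotv (grad x) v.

Definition lipschitz_grad (grad : vec -> vec) (L : R) : Prop :=
  forall x y, enorm (grad x - grad y) <= L * enorm (x - y).

(* pseudo-convexity: the gradient is pseudo-monotone *)
Definition pseudo_monotone (grad : vec -> vec) : Prop :=
  forall x y, 0 <= dotv (grad x) (y - x) -> 0 <= dotv (grad y) (y - x).

Definition stationary_set (grad : vec -> vec) : set vec := [set x | grad x = 0].

Definition proj_int (a b t : R) : R := Num.max a (Num.min b t).

Definition zpt (grad : vec -> vec) (x : vec) (gam : R) : vec := x - gam *: grad x.

Definition ratio (grad : vec -> vec) (x : vec) (gam : R) : R :=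
  gam * enorm (grad (zpt grad x gam) - grad x) / enorm (zpt grad x gam - x).

Fixpoint ls_step (grad : vec -> vec) (theta : R) (x : vec) (gam0 : R) (l : nat) : R :=
  match l with
  | 0%N => gam0
  | l'.+1 => let g := ls_step grad theta x gam0 l' in
             g * theta * Num.min 1 (1 / ratio grad x g)
  end.

(* The sequences x, z, h (accepted steps h_k) and gam0 (initial trials gamma_0^k)
   are generated by Algorithm 2 from x0 with the given parameters. *)
Definition algorithm2 (grad : vec -> vec)
  (mu nu hlo hup theta tau beta : R) (x0 : vec)
  (x z : nat -> vec) (h gam0 : nat -> R) : Prop :=
  x 0%N = x0 /\
  forall k,
    (exists l, ratio grad (x k) (ls_step grad theta (x k) (gam0 k) l) <= nu /\
               (forall j, (j < l)%N ->
                   nu < ratio grad (x k) (ls_step grad theta (x k) (gam0 k) j)) /\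
               h k = ls_step grad theta (x k) (gam0 k) l) /\
    z k = x k - h k *: grad (x k) /\
    x k.+1 = x k - h k *: (grad (x k) - beta *: (grad (x k) - grad (z k))) /\
    gam0 k.+1 = (if ratio grad (x k) (h k) <= mu
                 then proj_int hlo hup (tau * h k)
                 else proj_int hlo hup (h k)).
End Defs.

(* Fix a stationary point x* and write X = x - x*, d = x - z = h g and
   e = h (grad z - g), so that x+ - x* = X - (d + beta e).  Pseudo-monotonicity
   against the stationary point gives <g, X> >= 0 and <grad z, z - x*> >= 0,
   i.e. <d + e, X - d> >= 0; the line-search acceptance test gives
   |e| <= nu |d|.  Expanding |X - (d + beta e)|^2 and using these three facts
   leaves |X|^2 - (2 beta - 1) |d|^2 + beta^2 |e|^2, which is at most
   |X|^2 - kappa_2 |d|^2.  The constant kappa_2 is positive because the lower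
   bound on beta is the smaller root of nu^2 t^2 - 2 t + 1, whose larger root
   exceeds 1. *)
From Pilot Require Import Defs.
From HB Require Import structures.
From mathcomp Require Import all_boot all_order all_algebra.
From mathcomp Require Import all_classical all_reals all_analysis.
From mathcomp Require Import ring lra.
Import Order.TTheory GRing.Theory Num.Theory.
Import numFieldNormedType.Exports.
Local Open Scope ring_scope.

Set Implicit Arguments. Unset Strict Implicit.

Section EuclideanGeometry.
Variables (R : realType) (n : nat).
Implicit Types (u v w : 'rV[R]_n) (a : R).

Lemma dotvC u v : dotv u v = dotv v u.
Proof. by apply: eq_bigr => i _; rewrite mulrC. Qed.

Lemma dotvDl u v w : dotv (u + v) w = dotv u w + dotv v w.
Proof. by rewrite /dotv -big_split; apply: eq_bigr => i _; rewrite mxE mulrDl. Qed.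

Lemma dotvZl a u w : dotv (a *: u) w = a * dotv u w.
Proof. by rewrite /dotv mulr_sumr; apply: eq_bigr => i _; rewrite mxE mulrA. Qed.

Lemma dotvNl u w : dotv (- u) w = - dotv u w.
Proof. by rewrite -scaleN1r dotvZl mulN1r. Qed.

Lemma dotvDr u v w : dotv w (u + v) = dotv w u + dotv w v.
Proof. by rewrite dotvC dotvDl !(dotvC w). Qed.

Lemma dotvZr a u w : dotv w (a *: u) = a * dotv w u.
Proof. by rewrite dotvC dotvZl dotvC. Qed.

Lemma dotvNr u w : dotv w (- u) = - dotv w u.
Proof. by rewrite !(dotvC w) dotvNl. Qed.

Lemma dotv0l w : dotv 0 w = 0.
Proof. by rewrite -(scale0r 0) dotvZl mul0r. Qed.

Lemma dotvvv_ge0 u : 0 <= dotv u u.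
Proof. by apply: sumr_ge0 => i _; rewrite -expr2 sqr_ge0. Qed.

Lemma dotvvv_eq0 u : dotv u u = 0 -> u = 0.
Proof.
move=> uu0; apply/matrixP => i j; rewrite (ord1 i) mxE.
have /psumr_eq0P uu_eq0 : \sum_(k < n) u 0 k * u 0 k = 0 by [].
have /eqP := uu_eq0 (fun k _ => ltac:(rewrite -expr2; exact: sqr_ge0)) j isT.
by rewrite mulf_eq0 orbb => /eqP.
Qed.

Lemma enorm_ge0 u : 0 <= enorm u.
Proof. exact: sqrtr_ge0. Qed.

Lemma enorm_sqr u : enorm u ^+ 2 = dotv u u.
Proof. by rewrite sqr_sqrtr // dotvvv_ge0. Qed.

Lemma enorm_eq0 u : enorm u = 0 -> u = 0.
Proof. by move=> u0; apply: dotvvv_eq0; rewrite -enorm_sqr u0 expr0n. Qed.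

Lemma enorm0 : enorm (0 : 'rV[R]_n) = 0.
Proof. by rewrite /enorm dotv0l sqrtr0. Qed.

Lemma enormZ a u : enorm (a *: u) = `|a| * enorm u.
Proof. by rewrite /enorm dotvZl dotvZr mulrA -expr2 sqrtrM ?sqr_ge0 // sqrtr_sqr. Qed.

Lemma enormN u : enorm (- u) = enorm u.
Proof. by rewrite -scaleN1r enormZ normrN1 mul1r. Qed.

Lemma enorm_extragradient_le (X d e : 'rV[R]_n) (beta nu : R) :
  0 <= beta <= 1 -> 0 <= dotv d X -> 0 <= dotv (d + e) (X - d) ->
  enorm e <= nu * enorm d ->
  enorm (X - (d + beta *: e)) ^+ 2 <=
    enorm X ^+ 2 - (2 * beta - 1 - beta ^+ 2 * nu ^+ 2) * enorm d ^+ 2.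
Proof.
move=> /andP[beta0 beta1] dX_ge0 descent e_le.
have ee_le : dotv e e <= nu ^+ 2 * dotv d d.
  rewrite -!enorm_sqr -exprMn lerXn2r ?nnegrE ?enorm_ge0 //.
  exact: le_trans (enorm_ge0 e) e_le.
rewrite !enorm_sqr.
rewrite !(dotvDl, dotvDr, dotvNl, dotvNr, dotvZl, dotvZr) in descent ee_le *.
rewrite !(dotvC X) ?(dotvC e d) in descent ee_le *.
have one_beta : 0 <= 1 - beta by rewrite subr_ge0.
have := mulr_ge0 one_beta dX_ge0.
have := mulr_ge0 beta0 descent.
have := ler_wpM2l (sqr_ge0 beta) ee_le.
move: (dotv d d) (dotv e e) (dotv d e) (dotv d X) (dotv e X) => dd ee de dX eX.
by move=> scaled_ee scaled_descent scaled_dX; rewrite expr2 in scaled_ee *; nra.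
Qed.

End EuclideanGeometry.

Lemma extragradient_constant_gt0 (R : rcfType) (nu beta : R) :
  0 < nu < 1 -> (1 - Num.sqrt (1 - nu ^+ 2)) / nu ^+ 2 < beta -> beta <= 1 ->
  0 < 2 * beta - 1 - beta ^+ 2 * nu ^+ 2.
Proof.
move=> /andP[nu0 nu1] beta_gt beta1.
have nu2_gt0 : 0 < nu ^+ 2 by rewrite exprn_gt0.
have nu2_lt1 : nu ^+ 2 < 1 by rewrite expr2; nra.
set s := Num.sqrt (1 - nu ^+ 2) in beta_gt.
have s_ge0 : 0 <= s := sqrtr_ge0 _.
have s_sqr : s ^+ 2 = 1 - nu ^+ 2 by rewrite sqr_sqrtr // subr_ge0 ltW.
rewrite ltr_pdivrMr // in beta_gt.
have factor : nu ^+ 2 * (2 * beta - 1 - beta ^+ 2 * nu ^+ 2) =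
    (1 + s - nu ^+ 2 * beta) * (s + nu ^+ 2 * beta - 1).
  have -> : nu ^+ 2 = 1 - s ^+ 2 by rewrite s_sqr; ring.
  ring.
rewrite -(pmulr_rgt0 _ nu2_gt0) factor pmulr_rgt0; first by lra.
by rewrite expr2 in nu2_lt1 *; nra.
Qed.

Section Algorithm2.
Variables (R : realType) (n : nat) (grad : 'rV[R]_n -> 'rV[R]_n).

Lemma ratio_le_enorm (x : 'rV[R]_n) (hk nu : R) :
  0 <= hk -> Defs.ratio grad x hk <= nu ->
  hk * enorm (grad (zpt grad x hk) - grad x) <= nu * enorm (zpt grad x hk - x).
Proof.
move=> hk0; have [/enorm_eq0/subr0_eq ->|nz] := eqVneq (enorm (zpt grad x hk - x)) 0.
  by rewrite !subrr enorm0 !mulr0.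
have pos : 0 < enorm (zpt grad x hk - x) by rewrite lt_neqAle eq_sym nz enorm_ge0.
by rewrite /Defs.ratio ler_pdivrMr.
Qed.

Lemma extragradient_step_le (x z xs : 'rV[R]_n) (hk beta nu : R) :
  pseudo_monotone grad -> grad xs = 0 -> 0 <= beta <= 1 -> 0 <= hk ->
  Defs.ratio grad x hk <= nu -> z = x - hk *: grad x ->
  enorm (x - hk *: (grad x - beta *: (grad x - grad z)) - xs) ^+ 2 <=
    enorm (x - xs) ^+ 2 - (2 * beta - 1 - beta ^+ 2 * nu ^+ 2) * enorm (x - z) ^+ 2.
Proof.
move=> mono xs0 beta01 hk0 ratio_le z_def.
have step : x - hk *: (grad x - beta *: (grad x - grad z)) - xs =
    (x - xs) - (hk *: grad x + beta *: (hk *: (grad z - grad x))).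
  by rewrite scalerA mulrC -scalerA -[grad z - grad x]opprB scalerN -scalerDr addrAC.
have x_sub_z : x - z = hk *: grad x by rewrite z_def subKr.
have z_sub_xs : z - xs = x - xs - hk *: grad x by rewrite z_def addrAC.
have stationary_mono y : 0 <= dotv (grad y) (y - xs).
  by apply: mono; rewrite xs0 dotv0l.
rewrite step x_sub_z; apply: enorm_extragradient_le => //.
- by rewrite dotvZl mulr_ge0.
- by rewrite -scalerDr addrC subrK -z_sub_xs dotvZl mulr_ge0.
- have := ratio_le_enorm hk0 ratio_le.
  by rewrite /zpt -z_def -[z - x]opprB enormN x_sub_z !enormZ ger0_norm.
Qed.

Lemma ratio_ge0 (x : 'rV[R]_n) (gam : R) : 0 <= gam -> 0 <= Defs.ratio grad x gam.
Proof. by move=> gam_ge0; rewrite /Defs.ratio !mulr_ge0 ?invr_ge0 ?enorm_ge0. Qed.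

Lemma ls_step_ge0 (theta : R) (x : 'rV[R]_n) (gam : R) (l : nat) :
  0 <= theta -> 0 <= gam -> 0 <= ls_step grad theta x gam l.
Proof.
move=> theta0 gam_ge0; elim: l => [|l IHl] //=.
rewrite !mulr_ge0 // le_min ler01 /= div1r invr_ge0.
exact: ratio_ge0.
Qed.

Lemma algorithm2_step_ge0 (mu nu hlo hup theta tau beta : R) (x0 : 'rV[R]_n)
    (x z : nat -> 'rV[R]_n) (h gam0 : nat -> R) :
  algorithm2 grad mu nu hlo hup theta tau beta x0 x z h gam0 ->
  0 <= hlo -> 0 <= gam0 0%N -> 0 <= theta -> forall k, 0 <= h k.
Proof.
move=> [_ alg] hlo0 gam00 theta0.
have gam0_ge0 k : 0 <= gam0 k.
  case: k => [//|k]; have [_ [_ [_ ->]]] := alg k.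
  by case: ifP => _; rewrite /proj_int le_max hlo0.
by move=> k; have [[l [_ [_ ->]]] _] := alg k; exact: ls_step_ge0.
Qed.

End Algorithm2.

Theorem proposition2 (R : realType) (n : nat)
  (f : 'rV[R]_n -> R) (grad : 'rV[R]_n -> 'rV[R]_n) (L : R)
  (mu nu hlo hup theta tau beta : R) (x0 : 'rV[R]_n)
  (x z : nat -> 'rV[R]_n) (h gam0 : nat -> R) :
  is_gradient f grad ->
  lipschitz_grad grad L ->
  pseudo_monotone grad ->
  (exists xs, stationary_set grad xs) ->
  0 < mu -> mu < nu -> nu < 1 ->
  0 < hlo -> hlo < 1 -> 1 <= gam0 0%N -> gam0 0%N <= hup ->
  0 < theta -> theta < 1 -> 1 < tau ->
  (1 - Num.sqrt (1 - nu ^+ 2)) / nu ^+ 2 < beta -> beta <= 1 ->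
  algorithm2 grad mu nu hlo hup theta tau beta x0 x z h gam0 ->
  (forall k, grad (x k) != 0) ->
  0 < 2 * beta - 1 - beta ^+ 2 * nu ^+ 2 /\
  forall xs, stationary_set grad xs -> forall k,
    enorm (x k.+1 - xs) ^+ 2 <=
      enorm (x k - xs) ^+ 2
      - (2 * beta - 1 - beta ^+ 2 * nu ^+ 2) * enorm (x k - z k) ^+ 2.
Proof.
move=> _ _ mono _ mu0 mu_nu nu1 hlo0 _ gam00 _ theta0 _ _ beta_gt beta1 alg _.
have kappa_gt0 : 0 < 2 * beta - 1 - beta ^+ 2 * nu ^+ 2.
  by apply: extragradient_constant_gt0 => //; apply/andP; split; lra.
have beta0 : 0 <= beta by nra.
split=> // xs xs0 k.
have h_ge0 := algorithm2_step_ge0 alg (ltW hlo0) (le_trans ler01 gam00) (ltW theta0) k.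
have [[l [accepted [_ hk]]] [zk [xk _]]] := alg.2 k.
rewrite xk; apply: extragradient_step_le => //; first by rewrite beta0.
by rewrite -hk in accepted.
Qed.
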